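(* Let $G=(V,E)$ be a graph, let $\mathbb L=\{1,\dots,L\}\subset V$ be a set of training nodes with class labels $y_l\in\{1,\dots,K\}$, and fix a bandwidth $\sigma>0$. For any two nodes $i,j$, let $\mathbf d_i=(d_{i1},\dots,d_{iL})$ and $\mathbf d_j=(d_{j1},\dots,d_{jL})$ be their shortest-path distances to the training nodes. If $d_{il}\ge d_{jl}$ for all $l\in\{1,\dots,L\}$, then $\hat u_{v_i}\ge \hat u_{v_j}$, where $\hat u_{v}$ denotes the GKDE vacuity defined in the context.
   Context: Graph-based Kernel Dirichlet distribution Estimation (GKDE): let $g(d)=\frac{1}{\sigma\sqrt{2\pi}}\exp\!\big(-\frac{d^2}{2\sigma^2}\big)$. For a node $m$ and training node $l$, define $\mathbf h(y_l,d_{ml})=(h_1,\dots,h_K)$ with $h_k=g(d_{ml})$ if $y_l=k$ and $h_k=0$ otherwise, where $d_{ml}$ is the shortest-path distance between $m$ and $l$. The prior evidence of node $m$ is $\hat{\mathbf e}_m=\sum_{l\in\mathbb L}\mathbf h(y_l,d_{ml})=(\hat e_{m1},\dots,\hat e_{mK})$, the prior Dirichlet parameter is $\hat{\boldsymbol\alpha}_m=\hat{\mathbf e}_m+\mathbf 1$, and the GKDE vacuity of node $m$ is $\hat u_{v_m}=\frac{K}{\sum_{k=1}^K\hat\alpha_{mk}}=\frac{K}{\sum_{k=1}^K \hat e_{mk}+K}$. *)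

From mathcomp Require Import all_boot all_order all_algebra.
From mathcomp Require Import all_classical all_reals all_analysis.
Set Implicit Arguments. Unset Strict Implicit. Unset Printing Implicit Defensive.
Import Order.TTheory GRing.Theory Num.Theory.
Local Open Scope ring_scope.

Definition simple_graph (V : finType) (e : rel V) : Prop :=
  symmetric e /\ irreflexive e.

Definition walk_of_len (V : finType) (e : rel V) (x y : V) (n : nat) : bool :=
  [exists p : n.-tuple V, path e x p && (last x p == y)].

(* Shortest-path distance: Some d if y is reachable from x (a shortest walk
   is a simple path, hence has fewer than #|V| edges), None (= +oo) otherwise. *)
Definition sp_dist (V : finType) (e : rel V) (x y : V) : option nat :=
  let s := iota 0 #|V| in
  if has (walk_of_len e x y) s then Some (find (walk_of_len e x y) s) else None.

Definition dist_le (a b : option nat) : bool :=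
  match a, b with
  | _, None => true
  | None, Some _ => false
  | Some x, Some y => (x <= y)%N
  end.

Definition gkernel (R : realType) (sigma : R) (d : option nat) : R :=
  match d with
  | Some n => (sigma * Num.sqrt (2 * pi))^-1 * expR (- (n%:R ^+ 2) / (2 * sigma ^+ 2))
  | None => 0
  end.

Definition gkde_evidence (R : realType) (V : finType) (e : rel V) (sigma : R)
  (L K : nat) (train : 'I_L -> V) (y : 'I_L -> 'I_K) (m : V) (k : 'I_K) : R :=
  \sum_(l < L) (if y l == k then gkernel sigma (sp_dist e m (train l)) else 0).

(* GKDE vacuity u_hat_{v_m} = K / (sum_k alpha_hat_{mk}), alpha_hat = e_hat + 1. *)
Definition gkde_vacuity (R : realType) (V : finType) (e : rel V) (sigma : R)
  (L K : nat) (train : 'I_L -> V) (y : 'I_L -> 'I_K) (m : V) : R :=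
  K%:R / (\sum_(k < K) (gkde_evidence e sigma train y m k + 1)).

From mathcomp Require Import all_boot all_order all_algebra.
From mathcomp Require Import all_classical all_reals all_analysis.
Import Order.TTheory GRing.Theory Num.Theory.
Local Open Scope ring_scope.

(** The Gaussian kernel is nonnegative and nonincreasing in the distance
   (with g(+oo) = 0), so a node that is at least as far from every training
   node collects, class by class, at most as much evidence; the vacuity
   K / (sum_k e_k + K) is decreasing in the evidence. *)

Section GaussianKernel.

Variables (R : realType) (sigma : R).
Hypothesis sigma_gt0 : 0 < sigma.

Let gkernel_coef_ge0 : 0 <= (sigma * Num.sqrt (2 * pi))^-1.
Proof. by rewrite invr_ge0 mulr_ge0 ?sqrtr_ge0 ?ltW. Qed.

Lemma gkernel_ge0 (d : option nat) : 0 <= gkernel sigma d.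
Proof. by case: d => [n|] //=; rewrite mulr_ge0 ?expR_ge0. Qed.

Lemma gkernel_antitone (a b : option nat) :
  dist_le a b -> gkernel sigma b <= gkernel sigma a.
Proof.
case: b => [m|]; last by move=> _; exact: gkernel_ge0.
case: a => [n|] //= le_nm.
have s2_gt0 : 0 < 2 * sigma ^+ 2 by rewrite mulr_gt0 ?exprn_gt0.
apply: ler_wpM2l => //.
rewrite ler_expR ler_pdivlMr // divfK ?gt_eqF //.
by rewrite lerN2 ler_sqr ?nnegrE ?ler0n ?ler_nat.
Qed.

End GaussianKernel.

Section Vacuity.

Variables (R : realType) (V : finType) (e : rel V) (sigma : R).
Variables (L K : nat) (train : 'I_L -> V) (y : 'I_L -> 'I_K).
Hypothesis sigma_gt0 : 0 < sigma.

Lemma gkde_evidence_ge0 (m : V) (k : 'I_K) :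
  0 <= gkde_evidence e sigma train y m k.
Proof. by apply: sumr_ge0 => l _; case: ifP => _ //; exact: gkernel_ge0. Qed.

Lemma gkde_evidence_antitone (i j : V) (k : 'I_K) :
  (forall l, dist_le (sp_dist e j (train l)) (sp_dist e i (train l))) ->
  gkde_evidence e sigma train y i k <= gkde_evidence e sigma train y j k.
Proof.
move=> le_dist; apply: ler_sum => l _; case: ifP => _ //.
exact: gkernel_antitone.
Qed.

Lemma gkde_alpha_sum_ge_card (m : V) :
  K%:R <= \sum_(k < K) (gkde_evidence e sigma train y m k + 1).
Proof.
have -> : K%:R = \sum_(k < K) (1 : R) by rewrite sumr_const card_ord.
by apply: ler_sum => k _; rewrite lerDr gkde_evidence_ge0.
Qed.

Lemma gkde_vacuity_antitone (i j : V) : (0 < K)%N ->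
  (forall k, gkde_evidence e sigma train y i k <= gkde_evidence e sigma train y j k) ->
  gkde_vacuity e sigma train y j <= gkde_vacuity e sigma train y i.
Proof.
move=> K_gt0 le_ev.
have alpha_sum_gt0 m : 0 < \sum_(k < K) (gkde_evidence e sigma train y m k + 1).
  by apply: lt_le_trans (gkde_alpha_sum_ge_card m); rewrite ltr0n.
apply: ler_wpM2l; first exact: ler0n.
rewrite lef_pV2 ?posrE //.
by apply: ler_sum => k _; rewrite lerD2r.
Qed.

End Vacuity.

Theorem proposition1 (R : realType) (V : finType) (e : rel V)
  (L K : nat) (train : 'I_L -> V) (y : 'I_L -> 'I_K) (sigma : R) (i j : V) :
  simple_graph e -> injective train -> (0 < K)%N -> 0 < sigma ->
  (forall l : 'I_L, dist_le (sp_dist e j (train l)) (sp_dist e i (train l))) ->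
  gkde_vacuity e sigma train y j <= gkde_vacuity e sigma train y i.
Proof.
move=> _ _ K_gt0 sigma_gt0 le_dist.
apply: gkde_vacuity_antitone => // k.
exact: gkde_evidence_antitone.
Qed.
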